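(* Let $P,D$ be positive integers with $P\mid D$ and $\bm{W}\in\mathbb{R}^{P\times P\times P}$. For $\bm{h},\bm{r},\bm{t}\in\mathbb{R}^D$, viewed as matrices in $\mathbb{R}^{(D/P)\times P}$ with columns $\bm{h}_{:l},\bm{r}_{:m},\bm{t}_{:n}\in\mathbb{R}^{D/P}$, define $f(\bm{h},\bm{r},\bm{t})=\sum_{l,m,n=1}^{P}\bm{W}_{lmn}\langle\bm{h}_{:l},\bm{r}_{:m},\bm{t}_{:n}\rangle$, where $\langle\bm{a},\bm{b},\bm{c}\rangle=\sum_{d}\bm{a}_d\bm{b}_d\bm{c}_d$. Let $\bm{S}\in\mathbb{R}^{P^2\times P^2}$ be the permutation matrix with $\bm{S}_{(i-1)P+j,(j-1)P+i}=1$ for $i,j=1,\dots,P$ and all other entries $0$. Then: (a) the model learns symmetry rules, i.e. $\exists\bm{r}\in\mathbb{R}^D,\bm{r}\neq0$ such that $\forall\bm{h},\bm{t}\in\mathbb{R}^D$, $f(\bm{h},\bm{r},\bm{t})=f(\bm{t},\bm{r},\bm{h})$, if and only if $\operatorname{rank}(\bm{W}_{(2)}^T-\bm{S}\bm{W}_{(2)}^T)<P$; (b) the model learns antisymmetry rules, i.e. $\exists\bm{r}\in\mathbb{R}^D,\bm{r}\neq0$ such that $\forall\bm{h},\bm{t}$, $f(\bm{h},\bm{r},\bm{t})=-f(\bm{t},\bm{r},\bm{h})$, if and only if $\operatorname{rank}(\bm{W}_{(2)}^T+\bm{S}\bm{W}_{(2)}^T)<P$; (c) the model learns inverse rules, i.e.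 $\forall\bm{r}_1\in\mathbb{R}^D\ \exists\bm{r}_2\in\mathbb{R}^D\ \forall\bm{h},\bm{t}\in\mathbb{R}^D$, $f(\bm{h},\bm{r}_1,\bm{t})=f(\bm{t},\bm{r}_2,\bm{h})$, if and only if $\operatorname{rank}(\bm{W}_{(2)}^T)=\operatorname{rank}([\bm{W}_{(2)}^T,\bm{S}\bm{W}_{(2)}^T])$.
   Context: $\bm{W}_{(2)}\in\mathbb{R}^{P\times P^2}$ is the mode-2 unfolding of $\bm{W}$: its entry in row $m$ and column $l+(n-1)P$ is $\bm{W}_{lmn}$. $[\bm{A},\bm{B}]$ denotes horizontal concatenation of matrices. *)

From HB Require Import structures.
From mathcomp Require Import all_boot all_order all_algebra.
Set Implicit Arguments. Unset Strict Implicit. Unset Printing Implicit Defensive.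
Import Order.TTheory GRing.Theory Num.Theory.
Local Open Scope ring_scope.

Section Defs.
Variable R : realFieldType.

Definition ventry (D : nat) (h : 'cV[R]_D) (k : nat) : R :=
  if insub k is Some i then h i 0 else 0.

(* h viewed as a (D/P) x P matrix, column-major (vec convention):
   entry (d, l) (0-based) is h_{l*(D/P) + d}. *)
Definition resh (P D : nat) (h : 'cV[R]_D) (d l : nat) : R :=
  ventry h (l * (D %/ P) + d).

Definition trilin (P D : nat) (h r t : 'cV[R]_D) (l m n : nat) : R :=
  \sum_(d < D %/ P) resh P h d l * resh P r d m * resh P t d n.

Definition score (P D : nat) (W : 'I_P -> 'I_P -> 'I_P -> R)
  (h r t : 'cV[R]_D) : R :=
  \sum_(l < P) \sum_(m < P) \sum_(n < P) W l m n * trilin P h r t l m n.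

(* mode-2 unfolding W_(2) in R^{P x P^2}: entry (m, l + n*P) (0-based) is W l m n.
   mxvec_index n l has value n * P + l. *)
Definition unfold2 (P : nat) (W : 'I_P -> 'I_P -> 'I_P -> R) : 'M[R]_(P, P * P) :=
  \matrix_(m < P, c < P * P)
     (mxvec (\matrix_(n < P, l < P) W l m n) : 'rV[R]_(P * P)) 0 c.

Definition swapmx (P : nat) : 'M[R]_(P * P) :=
  \sum_(i < P) \sum_(j < P) delta_mx (mxvec_index i j) (mxvec_index j i).
End Defs.

From HB Require Import structures.
From mathcomp Require Import all_boot all_order all_algebra zify.
Import Order.TTheory GRing.Theory Num.Theory.
Set Implicit Arguments. Unset Strict Implicit. Unset Printing Implicit Defensive.
Local Open Scope ring_scope.

(* Reading h, r, t as (D/P) x P matrices with rows h_d, r_d, t_d, the score is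
   f(h, r, t) = sum_d h_d^T M(r_d) t_d, where M(x) := W x_2 x is the mode-2 contraction.
   Testing on matrix units shows that f(h, r1, t) = c f(t, r2, h) for all h, t iff
   M(r1_d) = c M(r2_d)^T for every d.  As W_(2)^T x = vec(M(x)^T) and S maps vec A to
   vec A^T, this says W_(2)^T r1_d = c S W_(2)^T r2_d.  With c = 1 or -1 and r1 = r2 the rule
   exists iff W_(2)^T - c S W_(2)^T has a nonzero kernel vector; the inverse rule holds iff
   the column space of S W_(2)^T lies in that of W_(2)^T. *)

Lemma mul_delta_mxE (R : pzRingType) m n p (i : 'I_m) (j : 'I_n) (B : 'M[R]_(n, p)) k l :
  (delta_mx i j *m B) k l = (k == i)%:R * B j l.
Proof.
rewrite mxE (bigD1 j) //= big1 ?addr0 => [|j' /negbTE nj]; rewrite mxE ?nj ?eqxx ?andbT //.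
by rewrite andbF mul0r.
Qed.

Lemma mxvec_index_eq m n (i a : 'I_m) (j b : 'I_n) :
  (mxvec_index i j == mxvec_index a b) = (i == a) && (j == b).
Proof.
apply/eqP/andP => [|[/eqP-> /eqP->] //].
by move/cast_ord_inj/enum_rank_inj => [-> ->].
Qed.

Section RankCriteria.
Variable F : fieldType.

Lemma mxrank_lt_colP m n (A : 'M[F]_(m, n)) :
  (\rank A < n)%N <-> exists x : 'cV_n, x != 0 /\ A *m x = 0.
Proof.
have -> : (\rank A < n)%N = (kermx A^T != 0).
  by rewrite kermx_eq0 /row_free mxrank_tr ltn_neqAle rank_leq_col andbT.
split=> [/rowV0Pn[v /sub_kermxP vA0 nz_v] | [x [nz_x Ax0]]].
  exists v^T; split; first by rewrite trmx_eq0.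
  by apply: trmx_inj; rewrite trmx_mul trmxK vA0 trmx0.
apply/rowV0Pn; exists x^T; last by rewrite trmx_eq0.
by apply/sub_kermxP; rewrite -trmx_mul Ax0 trmx0.
Qed.

Lemma mxrank_row_mx_eqP m n p (A : 'M[F]_(m, n)) (B : 'M[F]_(m, p)) :
  \rank A = \rank (row_mx A B) <-> forall x : 'cV_p, exists y : 'cV_n, A *m y = B *m x.
Proof.
rewrite -mxrank_tr -[\rank (row_mx A B)]mxrank_tr tr_row_mx -addsmxE.
have [_ eq_rank] := mxrank_leqif_sup (addsmxSl A^T B^T).
rewrite addsmx_sub submx_refl /= in eq_rank.
apply: (iff_trans (rwP eqP)); rewrite eq_rank.
split=> [/submxP[Z BZ] x | BA].
  by exists (Z^T *m x); rewrite mulmxA -[B]trmxK BZ trmx_mul trmxK.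
apply/row_subP => j; have [y Ay] := BA (delta_mx j 0).
by rewrite -tr_col colE -Ay trmx_mul submxMl.
Qed.
End RankCriteria.

Lemma ventry_ord (R : realFieldType) n (h : 'cV[R]_n) (i : 'I_n) : ventry h i = h i 0.
Proof. by rewrite /ventry valK. Qed.

Section ScoreSlices.
Variables (R : realFieldType) (P D : nat).
Hypothesis hPD : (P %| D)%N.
Local Notation K := (D %/ P)%N.

Definition slice (r : 'cV[R]_D) (d : 'I_K) : 'cV[R]_P := \col_m resh P r d m.

Definition unslice (F : 'I_K -> 'cV[R]_P) : 'cV[R]_D :=
  \col_(i < D) if insub (i %% K)%N is Some d then ventry (F d) (i %/ K) else 0.

Lemma resh_unslice F (d : 'I_K) (m : 'I_P) : resh P (unslice F) d m = F d m 0.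
Proof.
have K_gt0 : (0 < K)%N by case: d => d /=; case: K.
have lt_idx : (m * K + d < D)%N.
  have : (m.+1 * K <= P * K)%N by rewrite leq_mul2r ltn_ord orbT.
  by rewrite [(P * _)%N]mulnC divnK // mulSn; case: d => /=; lia.
rewrite /resh -[(m * K + d)%N]/(val (Ordinal lt_idx)) ventry_ord mxE /=.
by rewrite modnMDl modn_small // divnMDl // (divn_small (ltn_ord d)) addn0 valK ventry_ord.
Qed.

Lemma slice_unslice F d : slice (unslice F) d = F d.
Proof. by apply/matrixP => m j; rewrite ord1 mxE resh_unslice. Qed.

Lemma slice0 d : slice 0 d = 0.
Proof.
by apply/matrixP => m j; rewrite !mxE /resh /ventry; case: insub => [i|]; rewrite ?mxE.
Qed.

Lemma slices_eq0 r : (forall d, slice r d = 0) -> r = 0.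
Proof.
move=> r0; apply/matrixP => i j; rewrite ord1 mxE.
have K_gt0 : (0 < K)%N.
  by case: i => k; rewrite -{1}(divnK hPD); case: K.
have lt_d : (i %% K < K)%N by rewrite ltn_pmod.
have lt_m : (i %/ K < P)%N by rewrite ltn_divLR // mulnC divnK.
have /matrixP/(_ (Ordinal lt_m) 0) := r0 (Ordinal lt_d).
by rewrite !mxE /resh /= -divn_eq ventry_ord.
Qed.

Variable W : 'I_P -> 'I_P -> 'I_P -> R.

Definition mode2_mul (x : 'cV[R]_P) : 'M[R]_P := \matrix_(l, n) \sum_m W l m n * x m 0.

Lemma score_slices h r t :
  score W h r t =
  \sum_(d < K) ((slice h d)^T *m mode2_mul (slice r d) *m slice t d) 0 0.
Proof.
(* Both sides are brought to \sum_l \sum_m \sum_n \sum_d W l m n * h_dl * r_dm * t_dn. *)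
rewrite /score /trilin.
under eq_bigr do under eq_bigr do under eq_bigr do rewrite mulr_sumr.
under [RHS]eq_bigr do rewrite mxE.
under [RHS]eq_bigr do under eq_bigr do rewrite !mxE mulr_suml.
under [RHS]eq_bigr do under eq_bigr do under eq_bigr do rewrite !mxE mulr_sumr mulr_suml.
rewrite [RHS]exchange_big /=.
under [RHS]eq_bigr do rewrite exchange_big /=.
under [RHS]eq_bigr do under eq_bigr do rewrite exchange_big /=.
rewrite [RHS]exchange_big /=.
under [RHS]eq_bigr do rewrite exchange_big /=.
apply: eq_bigr => l _; apply: eq_bigr => m _; apply: eq_bigr => n _; apply: eq_bigr => d _.
by rewrite mxE [in RHS]mulrCA !mulrA.
Qed.

Definition unit_vec (d : 'I_K) (l : 'I_P) : 'cV[R]_D :=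
  unslice (fun d' => (d' == d)%:R *: delta_mx l 0).

Lemma score_unit_vec r d l n :
  score W (unit_vec d l) r (unit_vec d n) = mode2_mul (slice r d) l n.
Proof.
rewrite score_slices (bigD1 d) //= big1 ?addr0 => [|d' /negbTE nd]; last first.
  by rewrite !slice_unslice nd scale0r trmx0 !mul0mx mxE.
by rewrite !slice_unslice eqxx !scale1r trmx_delta -rowE -colE !mxE.
Qed.

Lemma score_swapP c r1 r2 :
  (forall h t, score W h r1 t = c * score W t r2 h) <->
  (forall d, mode2_mul (slice r1 d) = c *: (mode2_mul (slice r2 d))^T).
Proof.
split=> [eq_score d | eq_slices h t].
  by apply/matrixP => l n; rewrite -score_unit_vec eq_score score_unit_vec !mxE.
have tr11 (A : 'M[R]_1) : A^T = A by rewrite [A]mx11_scalar tr_scalar_mx.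
rewrite !score_slices mulr_sumr; apply: eq_bigr => d _.
rewrite eq_slices -scalemxAr -scalemxAl mxE; congr (_ * _).
by rewrite -[(slice t d)^T *m _ *m _]tr11 !trmx_mul !trmxK mulmxA.
Qed.

Lemma unfold2_mulE x : (unfold2 W)^T *m x = (mxvec (mode2_mul x)^T)^T.
Proof.
apply/matrixP => k z; rewrite ord1 {z}; case/mxvec_indexP: k => n l.
rewrite !mxE mxvecE !mxE; apply: eq_bigr => m _.
by rewrite !mxE mxvecE mxE.
Qed.

Lemma swapmx_mxvec (A : 'M[R]_P) : swapmx R P *m (mxvec A)^T = (mxvec A^T)^T.
Proof.
apply/matrixP => k z; rewrite ord1 {z}; case/mxvec_indexP: k => i j.
rewrite [RHS]mxE mxvecE [RHS]mxE /swapmx mulmx_suml summxE.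
under eq_bigr do rewrite mulmx_suml summxE.
under eq_bigr do under eq_bigr do rewrite mul_delta_mxE mxvec_index_eq !mxE mxvecE.
rewrite pair_bigA (bigD1 (i, j)) //= !eqxx mul1r big1 ?addr0 // => -[a b].
by rewrite xpair_eqE [i == a]eq_sym [j == b]eq_sym => /negbTE ->; rewrite mul0r.
Qed.

Lemma unfold2_swapP c x y :
  (unfold2 W)^T *m x = c *: (swapmx R P *m ((unfold2 W)^T *m y)) <->
  mode2_mul x = c *: (mode2_mul y)^T.
Proof.
rewrite !unfold2_mulE swapmx_mxvec trmxK -!linearZ /=.
by split=> [/trmx_inj/(can_inj mxvecK) <- | ->]; rewrite trmxK.
Qed.

Hypothesis hK : (0 < K)%N.

Lemma exists_swap_ruleP c :
  (exists r : 'cV[R]_D, r != 0 /\ forall h t, score W h r t = c * score W t r h) <->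
  (\rank ((unfold2 W)^T - c *: (swapmx R P *m (unfold2 W)^T))%R < P)%N.
Proof.
have kerE x : ((unfold2 W)^T - c *: (swapmx R P *m (unfold2 W)^T)) *m x = 0 <->
    mode2_mul x = c *: (mode2_mul x)^T.
  by rewrite mulmxBl -scalemxAl -mulmxA (rwP eqP) subr_eq0 -(rwP eqP) unfold2_swapP.
rewrite mxrank_lt_colP; split=> [[r [nz_r /score_swapP eq_r]] | [x [nz_x /kerE eq_x]]].
  have [d nz_d | slices0] := pickP (fun d => slice r d != 0).
    by exists (slice r d); split=> //; apply/kerE.
  by case/eqP: nz_r; apply: slices_eq0 => d; apply/eqP/negbFE/slices0.
exists (unslice (fun _ => x)); split; last by apply/score_swapP => d; rewrite slice_unslice.
apply: contra nz_x => /eqP r0.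
by rewrite -(slice_unslice (fun _ => x) (Ordinal hK)) r0 slice0.
Qed.

Lemma inverse_ruleP :
  (forall r1 : 'cV[R]_D, exists r2 : 'cV[R]_D,
     forall h t, score W h r1 t = score W t r2 h) <->
  \rank (unfold2 W)^T = \rank (row_mx (unfold2 W)^T (swapmx R P *m (unfold2 W)^T)).
Proof.
rewrite mxrank_row_mx_eqP; split=> [inv x | inv r1].
  have [r2 eq_r2] := inv (unslice (fun _ => x)).
  have /score_swapP/(_ (Ordinal hK)) : forall h t,
      score W h (unslice (fun _ => x)) t = 1 * score W t r2 h.
    by move=> h t; rewrite mul1r eq_r2.
  rewrite slice_unslice scale1r => eq_x.
  exists (slice r2 (Ordinal hK)); rewrite -mulmxA -[_ *m (_ *m x)]scale1r.
  by apply/unfold2_swapP; rewrite scale1r eq_x trmxK.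
have /fin_all_exists[y eq_y] d :
    exists y, (unfold2 W)^T *m y = swapmx R P *m (unfold2 W)^T *m slice r1 d.
  exact: inv.
exists (unslice y) => h t; rewrite -[score W t _ h]mul1r; move: h t.
apply/score_swapP => d; rewrite slice_unslice scale1r.
have := eq_y d; rewrite -mulmxA -[_ *m (_ *m _)]scale1r => /unfold2_swapP ->.
by rewrite scale1r trmxK.
Qed.

End ScoreSlices.

Theorem theorem1 (R : realFieldType) (P D : nat) (hP : (0 < P)%N) (hD : (0 < D)%N)
  (hPD : (P %| D)%N) (W : 'I_P -> 'I_P -> 'I_P -> R) :
  let f := @score R P D W in
  let W2T := (unfold2 W)^T in
  let S := swapmx R P in
  ((exists r : 'cV[R]_D, r != 0 /\ forall h t : 'cV[R]_D, f h r t = f t r h)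
     <-> (\rank (W2T - S *m W2T)%R < P)%N)
  /\
  ((exists r : 'cV[R]_D, r != 0 /\ forall h t : 'cV[R]_D, f h r t = - f t r h)
     <-> (\rank (W2T + S *m W2T)%R < P)%N)
  /\
  ((forall r1 : 'cV[R]_D, exists r2 : 'cV[R]_D,
       forall h t : 'cV[R]_D, f h r1 t = f t r2 h)
     <-> \rank W2T = \rank (row_mx W2T (S *m W2T))).
Proof.
move=> f W2T S; rewrite /f /W2T /S.
have hK : (0 < D %/ P)%N by rewrite divn_gt0 // dvdn_leq.
split; [|split].
- rewrite -[swapmx R P *m _]scale1r -(exists_swap_ruleP hPD _ hK).
  by split=> -[r [nz_r eq_r]]; exists r; split=> // h t; rewrite eq_r mul1r.
- rewrite -[swapmx R P *m _]opprK -[- (swapmx R P *m _)]scaleN1r.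
  rewrite -(exists_swap_ruleP hPD _ hK).
  by split=> -[r [nz_r eq_r]]; exists r; split=> // h t; rewrite eq_r mulN1r.
- exact: inverse_ruleP.
Qed.
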